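(* Let $u$ and $v$ be vertices of $G$. When routing from $u$ to $v$, the routing algorithm reaches $v$ after traversing at most $O(\log n)$ edges.
   Context: Let $T$ be a rooted tree on $n$ vertices with positive edge weights; $\delta_T(a,b)$ is the weight of the path in $T$ from $a$ to $b$. Ancestor/descendant refer to $T$, and a vertex counts as its own ancestor and descendant; ''deepest''/''highest'' refer to depth in $T$. $T_v$ is the subtree of $T$ rooted at $v$. For every non-leaf vertex $v$ fix a child $c_1(v)$ with $|T_{c_1(v)}|$ maximal; edges $(v,c_1(v))$ are leftmost. A subtree $R$ of $T$ is rooted at its vertex closest to the root, $rt(R)$, and inherits the leftmost labelling; $R_v$ is the subtree of $R$ rooted at $v$. $P_R(v)$ is the longest downward path from $v$ in $R$ using only leftmost edges, with last vertex $l(v)$; $l(R):=l(rt(R))$. A vertex $v$ of $R$ is $d$-balanced if $|R_{c_1(v)}|\le |R|-d$ (with $|R_{c_1(v)}|=0$ if $c_1(v)$ is undefined or not in $R$); $b_d(v)$ is the first $d$-balanced vertex on $P_R(v)$, or NULL. $CV(R,d)=\emptyset$ if $b_d(rt(R))$ is NULL, else $\{b\}\cup\bigcup_w CV(R_w,d)$ with $b=b_d(rt(R))$ and $w$ ranging over children of $b$ in $R$. Fix an integer $k\ge4$; for a subtree $R$ with $m$ vertices, $C_R=V(R)$ if $k\ge m/2-1$, else $C_R=CV(R,m/k)\cup\{l(R),rt(R)\}$. Canonical subtrees: $T$ is canonical; if $R$ is canonical, each component of $R$ minus $C_R$ is canonical. Each vertex $v$ lies in $C_R$ for exactly one canonical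 $R$, denoted $T^v$. The spanner $G$ has vertex set $V(T)$ and edges: all edges of $T$, and all pairs of distinct vertices of $C_R$ for every canonical $R$; edge $(a,b)$ has weight $\delta_T(a,b)$. Routing algorithm from current vertex $u$ to destination $v$, repeated until $v$ is reached: Case 0: if $v$ is adjacent to $u$, move to $v$. Case 1: $u$ is an ancestor of $v$; let $X$ be the vertices of $C_{T^u}$ that are ancestors of $v$, $x$ the deepest; move to $x$, then to the child of $x$ that is an ancestor of $v$. Case 2: $u$ is a descendant of $v$; let $X$ be the vertices of $C_{T^u}$ that are descendants of $v$ and ancestors of $u$, $x$ the highest; move to $x$, then to the parent of $x$. Case 3: $u$ is neither; let $X$ be the vertices of $C_{T^u}$ that are ancestors of $v$ but not of $u$, and $Y$ those that are ancestors of $u$ but not of $v$, $y$ the highest vertex of $Y$. Case 3 a): $X=\emptyset$: move to $y$, then to the parent of $y$. Case 3 b): $X\neq\emptyset$: with $x$ the deepest vertex of $X$ and $x'$ the child of $x$ that is an ancestor of $v$, move to $x$, then to $x'$. (Moving to the current vertex means staying.) *)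

From mathcomp Require Import all_boot.
Set Implicit Arguments. Unset Strict Implicit. Unset Printing Implicit Defensive.

(* Edge weights play no role in the routing decisions nor in the
   number of edges traversed, hence they are omitted. *)
Definition is_rooted_tree (V : finType) (r : V) (parent : V -> V) : Prop :=
  parent r = r /\ forall x : V, exists i : nat, iter i parent x = r.

Section Routing.
Variables (V : finType) (parent : V -> V) (c1 : V -> option V) (k : nat).

Definition anc (a b : V) : bool := [exists i : 'I_#|V|.+1, iter i parent b == a].
Definition child (a c : V) : bool := (parent c == a) && (c != a).

Definition leftmost_choice : Prop :=
  (forall v, c1 v = None <-> forall c, ~~ child v c) /\
  (forall v c, c1 v = Some c ->
     child v c /\ forall c', child v c' -> #|[set x | anc c' x]| <= #|[set x | anc c x]|).

Definition sub (R : {set V}) (v : V) : {set V} := R :&: [set x | anc v x].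

Definition rt (R : {set V}) : option V :=
  [pick x in R | (parent x \notin R) || (parent x == x)].

Definition c1R (R : {set V}) (v : V) : option V :=
  if c1 v is Some c then (if c \in R then Some c else None) else None.

Definition sizeL (R : {set V}) (v : V) : nat :=
  if c1R R v is Some c then #|sub R c| else 0.

(* v is d-balanced in R for d = m/k :  |R_{c1 v}| <= |R| - m/k *)
Definition balanced (R : {set V}) (m : nat) (v : V) : bool :=
  k * sizeL R v + m <= k * #|R|.

Fixpoint lfollow (R : {set V}) (fuel : nat) (v : V) : V :=
  match fuel with
  | 0 => v
  | S f => if c1R R v is Some c then lfollow R f c else v
  end.
Definition lR (R : {set V}) (v : V) : V := lfollow R #|V| v.

Fixpoint bfind (R : {set V}) (m : nat) (fuel : nat) (v : V) : option V :=
  match fuel with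
  | 0 => None
  | S f => if balanced R m v then Some v
           else if c1R R v is Some c then bfind R m f c else None
  end.

Fixpoint CV (m : nat) (fuel : nat) (R : {set V}) : {set V} :=
  match fuel with
  | 0 => set0
  | S f =>
    match (if rt R is Some x then bfind R m #|V|.+1 x else None) with
    | None => set0
    | Some b => b |: \bigcup_(w in R | child b w) CV m f (sub R w)
    end
  end.

Definition C (R : {set V}) : {set V} :=
  if #|R| <= 2 * k + 2 then R
  else CV #|R| #|V|.+1 R :|:
       (if rt R is Some x then [set x; lR R x] else set0).

Definition adjT (x y : V) : bool := child x y || child y x.
Definition restr (A : {set V}) : rel V :=
  fun x y => [&& x \in A, y \in A & adjT x y].
Definition comp (A : {set V}) (x : V) : {set V} := [set y | connect (restr A) x y].

Inductive canonical : {set V} -> Prop :=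
  | canT : canonical setT
  | canC R x : canonical R -> x \in R :\: C R -> canonical (comp (R :\: C R) x).

Definition adjG (u v : V) : Prop :=
  adjT u v \/ exists R, [/\ canonical R, u \in C R, v \in C R & u != v].

Definition deepest (X : {set V}) (x : V) : Prop :=
  x \in X /\ forall z, z \in X -> anc z x.
Definition highest (X : {set V}) (x : V) : Prop :=
  x \in X /\ forall z, z \in X -> anc x z.

(* one iteration of cases 1-3 with C_{T^u} = C R; c = number of edges used
   (moving to x costs 1 edge unless x = u; then one tree edge) *)
Definition stepR (R : {set V}) (v u u' : V) (c : nat) : Prop :=
  (anc u v /\ exists x, deepest [set z in C R | anc z v] x /\
        child x u' /\ anc u' v /\ c = (x != u) + 1)
  \/
  (anc v u /\ ~~ anc u v /\ exists x, highest [set z in C R | anc v z && anc z u] x /\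
        u' = parent x /\ c = (x != u) + 1)
  \/
  (~~ anc u v /\ ~~ anc v u /\
    ( ([set z in C R | anc z v && ~~ anc z u] = set0 /\
       exists y, highest [set z in C R | anc z u && ~~ anc z v] y /\
         u' = parent y /\ c = (y != u) + 1)
    \/
      ([set z in C R | anc z v && ~~ anc z u] != set0 /\
       exists x, deepest [set z in C R | anc z v && ~~ anc z u] x /\
         child x u' /\ anc u' v /\ c = (x != u) + 1))).

Definition step (v u u' : V) (c : nat) : Prop :=
  u != v /\
  ((adjG u v /\ u' = v /\ c = 1) \/
   (~ adjG u v /\ exists R, [/\ canonical R, u \in C R & stepR R v u u' c])).

Inductive reach (v : V) : V -> nat -> Prop :=
  | reach0 : reach v v 0
  | reachS u u' c c' : step v u u' c -> reach v u' c' -> reach v u (c + c').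

Inductive run (v : V) : V -> nat -> Prop :=
  | run0 u : run v u 0
  | runS u u' c c' : step v u u' c -> run v u' c' -> run v u (c + c').

End Routing.

(* The canonical subtrees containing a vertex u form a chain ending at the one,
   T^u ([home u]), whose C contains u.  Each member is a component of its
   predecessor R minus C_R and has fewer than |R|/k <= |R|/2 vertices: walking
   down the leftmost path of R to the first balanced vertex b, such a component
   either lies below a child of b (and we recurse) or avoids the subtree of b,
   which is large because the parent of b is not balanced.
   Let N(u,v) ([common u v]) be the smallest canonical subtree containing u and
   v, and Phi(u,v) = 2 (log|N| - log|T^u| + log|N|) + [u is not an ancestor of
   v], which is at most 4 log n + 1.  Each iteration of the routing algorithm
   traverses at most two edges and, except in one situation of Case 3 a),
   decreases Phi: it moves either to an ancestor of v in C(T^u), or to a vertex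
   u' such that no vertex of C(T^u) lies on the tree path from u' to v; then
   T^{u'} is the component of T^u - C(T^u) containing v, or a strictly larger
   member of the chain of u inside N(u,v).  In the exceptional situation the
   next iteration moves to the lowest common ancestor of u and v, which lies in
   C(T^u), and decreases Phi.  Hence at most 4 Phi + 2 edges are traversed. *)

From Pilot Require Import Defs.
From mathcomp Require Import all_boot zify.

Set Implicit Arguments. Unset Strict Implicit. Unset Printing Implicit Defensive.

Section RootedTree.
Variables (V : finType) (r : V) (parent : V -> V).
Hypothesis tree : is_rooted_tree r parent.
Implicit Types (A B Q R S : {set V}) (a b l q u v w x y z : V).

Local Notation anc := (Defs.anc parent).
Local Notation child := (Defs.child parent).
Local Notation adjT := (Defs.adjT parent).
Local Notation restr := (Defs.restr parent).
Local Notation comp := (Defs.comp parent).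
Local Notation sub := (Defs.sub parent).
Local Notation rt := (Defs.rt parent).

Lemma ancP a b : reflect (exists i, iter i parent b = a) (anc a b).
Proof.
apply: (iffP existsP) => [[i /eqP <-]|[i Hi]]; first by exists i.
have fc : fconnect parent b a by rewrite -Hi; apply: fconnect_iter.
have lt : findex parent b a < #|V|.+1.
  apply: (leq_trans (findex_max fc)); rewrite -size_orbit.
  by rewrite -(card_uniqP (orbit_uniq _ _)); exact: leqW (max_card _).
by exists (Ordinal lt); rewrite /= iter_findex.
Qed.

Lemma anc_refl a : anc a a.
Proof. by apply/ancP; exists 0. Qed.

Lemma anc_trans a b c : anc a b -> anc b c -> anc a c.
Proof. by move=> /ancP[i <-] /ancP[j <-]; apply/ancP; exists (i + j); rewrite iterD. Qed.

Lemma anc_parent x : anc (parent x) x.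
Proof. by apply/ancP; exists 1. Qed.

Lemma anc_root x : anc r x.
Proof. by case: tree => _ /(_ x) [i Hi]; apply/ancP; exists i. Qed.

Lemma iter_parent_root i : iter i parent r = r.
Proof. by elim: i => //= i ->; case: tree. Qed.

Lemma parent_fixed_root x : parent x = x -> x = r.
Proof.
move=> px; case: tree => _ /(_ x) [i]; rewrite (_ : iter i parent x = x) //.
by elim: i => //= i ->.
Qed.

Lemma parent_neq x : x != r -> parent x != x.
Proof. by apply: contra => /eqP /parent_fixed_root ->. Qed.

Lemma anc_antisym a b : anc a b -> anc b a -> a = b.
Proof.
move=> /ancP[i Hi] /ancP[j Hj].
have cycle t : iter (t * (j + i)) parent b = b.
  by elim: t => [|t IH] //; rewrite mulSn iterD IH iterD Hi Hj.
have [/eqP|pos] := posnP (j + i).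
  by rewrite addn_eq0 => /andP[_ /eqP i0]; rewrite -Hi i0.
case: tree => _ /(_ b) [d Hd].
have br : b = r.
  rewrite -(cycle d) -(subnK (leq_pmulr d pos)) iterD Hd.
  exact: iter_parent_root.
by rewrite -Hi br iter_parent_root.
Qed.

Lemma anc_total a b x : anc a x -> anc b x -> anc a b || anc b a.
Proof.
move=> /ancP[i Hi] /ancP[j Hj]; have [ij|ji] := leqP i j.
  by apply/orP; right; apply/ancP; exists (j - i); rewrite -Hi -iterD subnK.
by apply/orP; left; apply/ancP; exists (i - j); rewrite -Hj -iterD subnK // ltnW.
Qed.

Lemma anc_parent_of a b : anc a b -> a != b -> anc a (parent b).
Proof.
move=> /ancP[[|i] Hi]; first by rewrite -Hi eqxx.
by move=> _; apply/ancP; exists i; rewrite -iterSr.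
Qed.

Lemma anc_exists_child a b : anc a b -> a != b ->
  exists c, [/\ parent c = a, c != a & anc c b].
Proof.
move=> /ancP[i]; elim: i b => [|i IH] b; first by move=> /= ->; rewrite eqxx.
rewrite iterSr => Hi ab; have [pa|pa] := eqVneq (parent b) a.
  by exists b; rewrite eq_sym anc_refl; split.
have [c [pc ca cb]] := IH _ Hi (contra_neq esym pa).
by exists c; split => //; apply: anc_trans cb (anc_parent _).
Qed.

Definition depth x := #|[set a | anc a x]|.

Lemma depth_lt a b : anc a b -> a != b -> depth a < depth b.
Proof.
move=> ab nab; apply: proper_card; apply/properP; split.
  by apply/subsetP => z; rewrite !inE => /anc_trans; apply.
exists b; rewrite !inE ?anc_refl //; apply: contra nab => ba.
by rewrite (anc_antisym ab ba).
Qed.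

Lemma lca_exists u v :
  exists l, [/\ anc l u, anc l v & forall w, anc w u -> anc w v -> anc w l].
Proof.
have P0 : anc r u && anc r v by rewrite !anc_root.
case: (@arg_maxnP _ r (fun w => anc w u && anc w v) depth P0) => l /andP[lu lv] lmax.
exists l; split => // w wu wv.
case/orP: (anc_total wu lu) => // lw; have [->|lw'] := eqVneq l w; first exact: anc_refl.
have : depth w <= depth l by apply: lmax; rewrite wu wv.
by rewrite leqNgt (depth_lt lw lw').
Qed.

Lemma deepest_exists (D : {set V}) w x0 : x0 \in D -> (forall z, z \in D -> anc z w) ->
  exists x, deepest parent D x.
Proof.
move=> x0D Dw; case: (@arg_maxnP _ x0 (mem D) depth x0D) => x xD xmax.
exists x; split => // z zD.
case/orP: (anc_total (Dw _ zD) (Dw _ xD)) => // xz; have [->|xz'] := eqVneq x z.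
  exact: anc_refl.
have : depth z <= depth x by apply: xmax.
by rewrite leqNgt (depth_lt xz xz').
Qed.

Lemma highest_exists (D : {set V}) w x0 : x0 \in D -> (forall z, z \in D -> anc z w) ->
  exists x, highest parent D x.
Proof.
move=> x0D Dw; case: (@arg_minnP _ x0 (mem D) depth x0D) => x xD xmin.
exists x; split => // z zD.
case/orP: (anc_total (Dw _ zD) (Dw _ xD)) => // zx; have [->|zx'] := eqVneq z x.
  exact: anc_refl.
have : depth x <= depth z by apply: xmin.
by rewrite leqNgt (depth_lt zx zx').
Qed.

Lemma connect_ind A (P : V -> Prop) x y :
  P x -> (forall a b, P a -> restr A a b -> P b) -> connect (restr A) x y -> P y.
Proof.
move=> Px Pstep /connectP[p pp ->]; elim: p x Px pp => [|a p IH] x Px //=.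
by move=> /andP[xa pa]; apply: (IH a) => //; apply: Pstep xa.
Qed.

Lemma restr_sym A : symmetric (restr A).
Proof. by move=> a b; rewrite /restr /Defs.adjT orbC andbCA. Qed.

Lemma comp_self A x : x \in comp A x.
Proof. by rewrite inE connect0. Qed.

Lemma comp_sub A x y : x \in A -> y \in comp A x -> y \in A.
Proof.
move=> xA; rewrite inE.
by apply: (connect_ind (P := fun y => y \in A)) => // a b _ /and3P[].
Qed.

Lemma connect_subset A B x y : A \subset B -> connect (restr A) x y -> connect (restr B) x y.
Proof.
move=> /subsetP AB; apply: connect_sub => a b /and3P[aA bA ab].
by apply: connect1; rewrite /restr ab !AB.
Qed.

Lemma comp_subset A B x : A \subset B -> comp A x \subset comp B x.
Proof. by move=> AB; apply/subsetP => y; rewrite !inE; apply: connect_subset. Qed.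

Lemma comp_eq A x y : y \in comp A x -> comp A y = comp A x.
Proof.
rewrite inE => xy; apply/setP => z; rewrite !inE; apply/idP/idP.
  exact: connect_trans.
by rewrite (sym_connect_sym (restr_sym A)) in xy; apply: connect_trans.
Qed.

Lemma connect_closed_set A B x y : x \in B ->
  (forall a b, a \in B -> b \in A -> adjT a b -> b \in B) ->
  connect (restr A) x y -> connect (restr (A :&: B)) x y /\ y \in B.
Proof.
move=> xB closedB.
apply: (connect_ind (P := fun y => connect (restr (A :&: B)) x y /\ y \in B)).
  by rewrite connect0.
move=> a b [xa aB] /and3P[aA bA ab]; have bB := closedB _ _ aB bA ab.
split => //; apply: connect_trans xa (connect1 _).
by rewrite /restr !inE aA aB bA bB ab.
Qed.

Lemma comp_closed_set A B x y : x \in B ->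
  (forall a b, a \in B -> b \in A -> adjT a b -> b \in B) ->
  y \in comp A x -> y \in B.
Proof. by move=> xB closedB; rewrite inE => /(connect_closed_set xB closedB) []. Qed.

Lemma connect_up A q x : anc q x -> (forall w, anc q w -> anc w x -> w \in A) ->
  connect (restr A) x q.
Proof.
move=> /ancP[i]; elim: i x => [|i IH] x; first by move=> /= ->; rewrite connect0.
rewrite iterSr => Hi between; have qp : anc q (parent x) by apply/ancP; exists i.
have between' w : anc q w -> anc w (parent x) -> w \in A.
  by move=> qw wp; apply: between qw (anc_trans wp (anc_parent _)).
have [px|px] := eqVneq (parent x) x; first by rewrite px in Hi between'; apply: IH.
apply: connect_trans (connect1 _) (IH _ Hi between').
rewrite /restr between ?anc_refl ?(anc_trans qp (anc_parent _)) // between' ?anc_refl //.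
by rewrite /Defs.adjT /child eqxx (eq_sym x) px orbT.
Qed.

Definition rooted_subtree Q q :=
  [/\ q \in Q, (forall y, y \in Q -> anc q y) &
      (forall y z, y \in Q -> anc q z -> anc z y -> z \in Q)].

Lemma rooted_setT : rooted_subtree setT r.
Proof. by split => // y _; apply: anc_root. Qed.

Lemma rooted_sub Q q w : rooted_subtree Q q -> w \in Q ->
  rooted_subtree (sub Q w) w.
Proof.
case=> qQ qanc qpath wQ; split; first by rewrite !inE wQ anc_refl.
  by move=> y; rewrite !inE => /andP[].
move=> y z; rewrite !inE => /andP[yQ wy] wz zy; rewrite wz andbT.
exact: qpath yQ (anc_trans (qanc _ wQ) wz) zy.
Qed.

Lemma rooted_parent Q q x : rooted_subtree Q q -> x \in Q -> x != q ->
  parent x \in Q /\ parent x != x.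
Proof.
case=> qQ qanc qpath xQ xq; split.
  by apply: qpath xQ (anc_parent_of (qanc _ xQ) _) (anc_parent _); rewrite eq_sym.
apply: contra xq => /eqP /parent_fixed_root xr.
have qr : q = r by apply: anc_antisym (anc_root q); rewrite -xr; apply: qanc.
by rewrite xr qr.
Qed.

Lemma rooted_top Q q x : rooted_subtree Q q -> x \in Q -> parent x \notin Q -> x = q.
Proof.
by move=> Qq xQ; have [//|xq] := eqVneq x q; have [-> _] := rooted_parent Qq xQ xq.
Qed.

Lemma rooted_rt Q q : rooted_subtree Q q -> rt Q = Some q.
Proof.
move=> Qq; have [qQ qanc _] := Qq; rewrite /rt.
case: pickP => [x /andP[xQ px]|/(_ q)]; last first.
  have [pQ|] := boolP (parent q \in Q); last by rewrite qQ.
  by rewrite qQ -(anc_antisym (qanc _ pQ) (anc_parent _)) eqxx orbT.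
have [->//|xq] := eqVneq x q.
by have [pQ px'] := rooted_parent Qq xQ xq; move: px; rewrite pQ (negbTE px').
Qed.

Definition top_in A q x :=
  [/\ anc q x, (forall w, anc q w -> anc w x -> w \in A) &
      (parent q \notin A) || (parent q == q)].

Lemma top_in_exists A x : x \in A -> exists q, top_in A q x.
Proof.
move=> xA.
pose P y := anc y x && [forall w, anc y w && anc w x ==> (w \in A)].
have Px : P x.
  rewrite /P anc_refl; apply/forallP => w; apply/implyP => /andP[xw wx].
  by rewrite (anc_antisym wx xw).
case: (arg_minnP depth Px) => q /andP[qx /forallP qA] qmin.
have between w : anc q w -> anc w x -> w \in A.
  by move=> qw wx; move: (qA w); rewrite qw wx.
exists q; split => //.
have [pA|//] := boolP (parent q \in A); have [//=|pq] := eqVneq (parent q) q.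
have Pp : P (parent q).
  rewrite /P (anc_trans (anc_parent _) qx); apply/forallP => w.
  apply/implyP => /andP[pw wx]; have [->|wq] := eqVneq w (parent q) => //.
  case/orP: (anc_total wx qx) => [wq'|]; last by move=> qw; apply: between qw wx.
  have [-> //|wq''] := eqVneq w q; first exact: between (anc_refl _) qx.
  by move: wq; rewrite (anc_antisym pw (anc_parent_of wq' wq'')) eqxx.
have : depth q <= depth (parent q) by apply: qmin.
by rewrite leqNgt (depth_lt (anc_parent _) pq).
Qed.

Lemma top_in_step A q a b : top_in A q a -> restr A a b -> top_in A q b.
Proof.
case=> qa between qtop /and3P[aA bA /orP[]/andP[/eqP pb ba]].
  split => //; first by apply: anc_trans qa _; rewrite -pb anc_parent.
  move=> w qw wb; have [->//|wb'] := eqVneq w b.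
  by apply: between => //; rewrite -pb; apply: anc_parent_of.
subst b; have [qa'|qa'] := eqVneq q a.
  by subst q; move: qtop; rewrite bA /= eq_sym (negbTE ba).
split => //; first exact: anc_parent_of.
by move=> w qw wb; apply: between => //; apply: anc_trans wb (anc_parent _).
Qed.

Lemma top_in_connect A q x y : top_in A q x -> connect (restr A) x y -> top_in A q y.
Proof. by move=> qx; apply: (connect_ind (P := top_in A q)) => // a b; apply: top_in_step. Qed.

Lemma rooted_comp A q x : top_in A q x -> rooted_subtree (comp A x) q.
Proof.
move=> qx; have [qanc between _] := qx; split.
- by rewrite inE; apply: connect_up qanc between.
- by move=> y; rewrite inE => /(top_in_connect qx) [].
- move=> y z; rewrite !inE => xy qz zy.
  have [_ between_y _] := top_in_connect qx xy.
  apply: connect_trans xy (connect_up zy _) => w zw wy.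
  exact: between_y (anc_trans qz zw) wy.
Qed.

Definition on_path u v z :=
  (anc z u \/ anc z v) /\ forall w, anc w u -> anc w v -> anc w z.

Lemma on_path_self u v : on_path u v u.
Proof. by split=> [|w //]; left; apply: anc_refl. Qed.

Lemma on_path_rooted Q q u v z : rooted_subtree Q q -> u \in Q -> v \in Q ->
  on_path u v z -> z \in Q.
Proof.
case=> qQ qanc qpath uQ vQ [[zu|zv] below].
  exact: qpath uQ (below _ (qanc _ uQ) (qanc _ vQ)) zu.
exact: qpath vQ (below _ (qanc _ uQ) (qanc _ vQ)) zv.
Qed.

Lemma connect_on_path A u v : (forall z, on_path u v z -> z \in A) ->
  connect (restr A) u v.
Proof.
move=> pathA; have [l [lu lv lca]] := lca_exists u v.
have up x : anc x u \/ anc x v -> anc l x -> x \in A.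
  by move=> xuv lx; apply: pathA; split => // w wu wv; apply: anc_trans (lca _ wu wv) lx.
apply: connect_trans (_ : connect (restr A) u l) _.
  by apply: connect_up lu _ => w lw wu; apply: up lw; left.
rewrite (sym_connect_sym (restr_sym A)).
by apply: connect_up lv _ => w lw wv; apply: up lw; right.
Qed.

Lemma exists_exit_up B a x : x \in B -> anc a x -> a \notin B ->
  exists z, [/\ anc a z, anc z x, z \in B & parent z \notin B].
Proof.
move=> xB /ancP[i]; elim: i x xB => [|i IH] x xB; first by move=> /= <-; rewrite xB.
rewrite iterSr => Hi aB; have [pB|pB] := boolP (parent x \in B).
  have [z [az zp zB pzB]] := IH _ pB Hi aB.
  by exists z; split => //; apply: anc_trans zp (anc_parent _).
by exists x; split => //; [apply/ancP; exists i.+1; rewrite iterSr | exact: anc_refl].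
Qed.

Lemma on_path_exit Q u v : u \in Q -> v \notin Q ->
  exists a b, [/\ a \in Q, b \notin Q, adjT a b, on_path u v a & on_path u v b].
Proof.
move=> uQ vQ; have [l [lu lv lca]] := lca_exists u v.
have on_l z : anc l z -> anc z u \/ anc z v -> on_path u v z.
  by move=> lz zuv; split => // w wu wv; apply: anc_trans (lca _ wu wv) lz.
have [lQ|lQ] := boolP (l \in Q).
  have vQc : v \in ~: Q by rewrite inE.
  have lQc : l \notin ~: Q by rewrite inE negbK.
  have [z [lz zv]] := exists_exit_up vQc lv lQc; rewrite !inE negbK => zQ pzQ.
  have zl : z != l by apply: contraNneq zQ => ->.
  exists (parent z), z; split => //.
  - rewrite /Defs.adjT /child eqxx; apply/orP; left.
    by apply: contraNneq zQ => ->.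
  - apply: on_l; first by rewrite anc_parent_of // eq_sym.
    by right; apply: anc_trans (anc_parent _) zv.
  - by apply: on_l; [exact: lz | right].
have [z [lz zu zQ pzQ]] := exists_exit_up uQ lu lQ.
have zl : z != l by apply: contraNneq lQ => <-.
exists z, (parent z); split => //.
- rewrite /Defs.adjT /child eqxx; apply/orP; right.
  by apply: contraNneq pzQ => <-.
- by apply: on_l; [exact: lz | left].
- apply: on_l; first by rewrite anc_parent_of // eq_sym.
  by left; apply: anc_trans (anc_parent _) zu.
Qed.

Lemma comp_adj A x a b : x \in A -> a \in comp A x -> b \in A -> adjT a b ->
  b \in comp A x.
Proof.
move=> xA xa bA ab; have aA := comp_sub xA xa; rewrite inE in xa.
rewrite inE; apply: connect_trans xa (connect1 _).
by rewrite /restr aA bA ab.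
Qed.

Lemma comp_in_subtree R S w x : parent w \in S -> x \in sub R w ->
  comp (R :\: S) x \subset comp (sub R w :\: S) x.
Proof.
move=> pwS xw; apply/subsetP => y; rewrite !inE => xy.
have closed a c : a \in sub R w -> c \in R :\: S -> adjT a c ->
    c \in sub R w.
  rewrite !inE => /andP[aR wa] /andP[cS cR] /orP[]/andP[/eqP pc ca].
    by rewrite cR (anc_trans wa) // -pc anc_parent.
  rewrite cR -pc anc_parent_of //; apply: contraNneq cS => wa'.
  by rewrite -pc -wa'.
have [xy' _] := connect_closed_set xw closed xy.
apply: connect_subset xy'; apply/subsetP => z; rewrite !inE.
by case/and3P => /andP[-> _] ->.
Qed.

Lemma comp_outside_subtree R S b x : b \in S -> x \in R :\: sub R b ->
  comp (R :\: S) x \subset R :\: sub R b.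
Proof.
move=> bS xB; apply/subsetP => y; apply: comp_closed_set xB _ => a c.
rewrite !inE => /andP[ab aR] /andP[cS cR] ac; rewrite aR /= in ab.
rewrite cR /= andbT; apply: contra ab => bc; case/orP: ac => /andP[/eqP pc ca].
  have [cb|cb] := eqVneq c b; first by rewrite cb bS in cS.
  by rewrite -pc anc_parent_of // eq_sym.
by rewrite (anc_trans bc) // -pc anc_parent.
Qed.

Section Separators.
Variables (c1 : V -> option V) (k : nat).
Hypothesis leftmost : leftmost_choice parent c1.
Implicit Types (m f : nat).

Local Notation C := (Defs.C parent c1 k).
Local Notation CV := (Defs.CV parent c1 k).
Local Notation canonical := (Defs.canonical parent c1 k).
Local Notation balanced := (Defs.balanced parent c1 k).
Local Notation c1R := (Defs.c1R c1).
Local Notation lfollow := (Defs.lfollow c1).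
Local Notation lR := (Defs.lR c1).
Local Notation bfind := (Defs.bfind parent c1 k).

Lemma c1_parent v c : c1 v = Some c -> parent c = v /\ c != v.
Proof. by case: leftmost => _ /(_ v c) H /H [/andP[/eqP -> ->]]. Qed.

Lemma c1R_Some R v c : c1R R v = Some c -> c1 v = Some c /\ c \in R.
Proof. by rewrite /Defs.c1R; case: (c1 v) => // c'; case: ifP => // c'R [<-]. Qed.

Definition leftmost_path w b :=
  forall z, anc w z -> z != w -> anc z b -> c1 (parent z) = Some z.

Lemma leftmost_path_refl w : leftmost_path w w.
Proof. by move=> z wz zw zw'; move: zw; rewrite (anc_antisym zw' wz) eqxx. Qed.

Lemma leftmost_path_cons w c b :
  c1 w = Some c -> anc c b -> leftmost_path c b -> leftmost_path w b.
Proof.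
move=> wc cb cpath z wz zw zb; have [pc cw] := c1_parent wc.
have [->|zc] := eqVneq z c; first by rewrite pc.
case/orP: (anc_total zb cb) => [zc'|cz]; last exact: cpath.
have zw' : anc z w by rewrite -pc; apply: anc_parent_of.
by move: zw; rewrite (anc_antisym zw' wz) eqxx.
Qed.

Lemma leftmost_path_sub w c b : anc w c -> leftmost_path w b -> leftmost_path c b.
Proof.
move=> wc wpath z cz zc zb; apply: wpath (anc_trans wc cz) _ zb.
by apply: contra zc => /eqP zw; rewrite (anc_antisym cz) // zw.
Qed.

Lemma lfollow_in R f w : w \in R -> lfollow R f w \in R.
Proof.
elim: f w => //= f IH w wR; case E: (c1R R w) => [c|] //.
by apply: IH; case: (c1R_Some E).
Qed.

Lemma lfollow_anc R f w : anc w (lfollow R f w).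
Proof.
elim: f w => [|f IH] w /=; first exact: anc_refl.
case E: (c1R R w) => [c|]; last exact: anc_refl.
have [wc _] := c1R_Some E; have [pc _] := c1_parent wc.
by apply: anc_trans (IH c); rewrite -pc anc_parent.
Qed.

Lemma lfollow_leftmost R f w : leftmost_path w (lfollow R f w).
Proof.
elim: f w => [|f IH] w /=; first exact: leftmost_path_refl.
case E: (c1R R w) => [c|]; last exact: leftmost_path_refl.
have [wc _] := c1R_Some E.
exact: leftmost_path_cons wc (lfollow_anc _ _ _) (IH c).
Qed.

Lemma bfind_Some R m f w b : w \in R -> bfind R m f w = Some b ->
  [/\ b \in R, anc w b, leftmost_path w b &
      b != w -> c1R R (parent b) = Some b /\ ~~ balanced R m (parent b)].
Proof.
elim: f w => [|f IH] w wR //=; case: ifP => [_ [<-]|unbal].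
  by split; rewrite ?anc_refl ?eqxx //; apply: leftmost_path_refl.
case E: (c1R R w) => [c|] // bfc.
have [wc cR] := c1R_Some E; have [pc _] := c1_parent wc.
have [bR cb cpath up] := IH _ cR bfc.
split => //; first by apply: anc_trans cb; rewrite -pc anc_parent.
  exact: leftmost_path_cons wc cb cpath.
by move=> bw; have [->|/up//] := eqVneq b c; rewrite pc E unbal.
Qed.

Lemma bfind_None R m f w : w \in R -> #|V| < f + depth w -> bfind R m f w = None ->
  k * #|R| < m.
Proof.
elim: f w => [|f IH] w wR /=; first by rewrite add0n ltnNge max_card.
move=> fuel; case: ifP => // unbal; case E: (c1R R w) => [c|]; last first.
  by move: unbal; rewrite /Defs.balanced /Defs.sizeL E muln0 add0n ltnNge => ->.
have [wc cR] := c1R_Some E; have [pc cw] := c1_parent wc.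
have wc_depth : depth w < depth c.
  by rewrite -pc; apply: depth_lt (anc_parent c) _; rewrite pc eq_sym.
by apply: IH cR _; apply: leq_trans fuel _; rewrite addSn -addnS leq_add2l.
Qed.

Lemma rt_in R x : rt R = Some x -> x \in R.
Proof. by rewrite /Defs.rt; case: pickP => // y /andP[yR _] [<-]. Qed.

Lemma CVS m f R : CV m f.+1 R =
  match (if rt R is Some x then bfind R m #|V|.+1 x else None) with
  | None => set0
  | Some b => b |: \bigcup_(w in R | child b w) CV m f (sub R w)
  end.
Proof. by []. Qed.

Lemma CV_rooted m f R q : rooted_subtree R q -> CV m f.+1 R =
  match bfind R m #|V|.+1 q with
  | None => set0
  | Some b => b |: \bigcup_(w in R | child b w) CV m f (sub R w)
  end.
Proof. by move=> Rq; rewrite CVS (rooted_rt Rq). Qed.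

Lemma CV_subset m f R : CV m f R \subset R.
Proof.
elim: f R => [|f IH] R; first exact: sub0set.
rewrite CVS; case Er: (rt R) => [x|]; last exact: sub0set.
case E: bfind => [b|]; last exact: sub0set.
have [bR _ _ _] := bfind_Some (rt_in Er) E.
rewrite subUset sub1set bR; apply/bigcupsP => w _.
exact: subset_trans (IH _) (subsetIl _ _).
Qed.

Lemma CV_child_subset m f R b w : w \in R -> child b w ->
  CV m f (sub R w) \subset b |: \bigcup_(w in R | child b w) CV m f (sub R w).
Proof.
move=> wR bw; apply/subsetP => y yw; rewrite in_setU1; apply/orP; right.
by apply/bigcupP; exists w; rewrite ?wR.
Qed.

Lemma no_CV_below_light_child m f R q z : rooted_subtree R q -> z \in R ->
  parent z \in R :\: CV m f R -> parent z != z -> c1 (parent z) != Some z ->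
  forall y, y \in CV m f R -> ~~ anc z y.
Proof.
elim: f R q z => [|f IH] R q z Rq zR; first by move=> _ _ _ y; rewrite inE.
have [qR qanc qpath] := Rq; rewrite (CV_rooted _ _ Rq).
case E: bfind => [b|]; last by move=> _ _ _ y; rewrite inE.
rewrite in_setD => /andP[pS pR] pz light y.
have [_ _ qbpath _] := bfind_Some qR E.
have zq : z != q.
  apply: contra pz => /eqP zq; rewrite zq in pR *.
  by rewrite -(anc_antisym (qanc _ pR) (anc_parent q)).
have not_above_b : ~~ anc z b.
  by apply: contra light => zb; rewrite qbpath ?qanc.
rewrite in_setU1 => /orP[/eqP -> //|/bigcupP[w /andP[wR bw] yw]].
have [/eqP pw wb] := andP bw.
have wy : anc w y by move: (subsetP (CV_subset _ _ _) _ yw); rewrite !inE => /andP[].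
apply/negP => zy; have [zw|zw] := eqVneq z w.
  by move: pS; rewrite zw pw in_setU1 eqxx.
case/orP: (anc_total zy wy) => [zw'|wz].
  by move: not_above_b; rewrite -pw anc_parent_of.
have pzw : parent z \in sub R w by rewrite !inE pR anc_parent_of // eq_sym.
have zw'' : z \in sub R w by rewrite !inE zR wz.
have pS' : parent z \in sub R w :\: CV m f (sub R w).
  by rewrite in_setD pzw andbT; apply: contra pS => /(subsetP (CV_child_subset _ _ wR bw)).
by move: (IH _ _ _ (rooted_sub Rq wR) zw'' pS' pz light y yw); rewrite zy.
Qed.

Lemma CV_comp_small m f R q x : rooted_subtree R q -> #|R| < f -> x \in R ->
  x \notin CV m f R -> k * #|comp (R :\: CV m f R) x| < m.
Proof.
elim: f R q x => [|f IH] R q x Rq Rf xR; first by rewrite ltn0 in Rf.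
have [qR qanc qpath] := Rq; rewrite (CV_rooted _ _ Rq).
case E: bfind => [b|] xS; last first.
  apply: leq_ltn_trans (bfind_None qR _ E); last by rewrite ltnS leq_addr.
  rewrite leq_mul2l subset_leq_card ?orbT //; apply/subsetP => y.
  by move/(comp_sub (_ : x \in R :\: set0)); rewrite !inE xR => /(_ isT)/andP[].
have [bR qb _ up] := bfind_Some qR E.
set S := b |: _ in xS *; have bS : b \in S by rewrite in_setU1 eqxx.
have [bx|bx] := boolP (anc b x).
  have xb : b != x by apply: contraNneq xS => <-.
  have [w [pw wb wx]] := anc_exists_child bx xb.
  have wR : w \in R by apply: qpath xR (anc_trans qb _) wx; rewrite -pw anc_parent.
  have bw : child b w by rewrite /Defs.child pw eqxx.
  have wS := CV_child_subset m f wR bw.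
  have smaller : #|sub R w| < f.
    apply: leq_trans _ (Rf : #|R| <= f); apply: proper_card; apply/properP.
    split; first exact: subsetIl.
    exists b; rewrite // !inE bR /=; apply: contra wb => wb'.
    by rewrite (anc_antisym wb') // -pw anc_parent.
  have xw : x \in sub R w by rewrite !inE xR wx.
  have xSw : x \notin CV m f (sub R w) by apply: contra xS; apply: (subsetP wS).
  apply: leq_ltn_trans (IH _ _ _ (rooted_sub Rq wR) smaller xw xSw).
  rewrite leq_mul2l subset_leq_card ?orbT //.
  apply: subset_trans (comp_in_subtree _ xw) (comp_subset _ (setDS _ wS)).
  by rewrite pw.
have bq : b != q by apply: contraNneq bx => ->; apply: qanc.
have [c1b unbal] := up bq.
have small : k * #|R :\: sub R b| < m.
  move: unbal; rewrite /Defs.balanced /Defs.sizeL c1b -ltnNge.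
  rewrite cardsD (setIidPr (subsetIl _ _)) mulnBr => unbal.
  by rewrite ltn_subLR ?leq_mul2l ?subset_leq_card ?subsetIl ?orbT // addnC.
apply: leq_ltn_trans small; rewrite leq_mul2l subset_leq_card ?orbT //.
by apply: comp_outside_subtree; rewrite // !inE xR bx.
Qed.

Lemma canonical_rooted R : canonical R -> exists q, rooted_subtree R q.
Proof.
case=> [|R' x _ xA]; first by exists r; exact: rooted_setT.
by have [q /rooted_comp Qq] := top_in_exists xA; exists q.
Qed.

Lemma C_small R : #|R| <= 2 * k + 2 -> C R = R.
Proof. by move=> small; rewrite /Defs.C small. Qed.

Lemma C_large R q : rooted_subtree R q -> 2 * k + 2 < #|R| ->
  C R = CV #|R| #|V|.+1 R :|: [set q; lR R q].
Proof. by move=> Rq large; rewrite /Defs.C leqNgt large /= (rooted_rt Rq). Qed.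

Lemma C_subset R : C R \subset R.
Proof.
rewrite /Defs.C; case: ifP => _ //; rewrite subUset CV_subset /=.
case Er: (rt R) => [x|]; last exact: sub0set.
by rewrite subUset !sub1set rt_in // lfollow_in // rt_in.
Qed.

Lemma no_C_below_light_child R q z : rooted_subtree R q -> 2 * k + 2 < #|R| ->
  z \in R -> parent z \in R :\: C R -> parent z != z -> c1 (parent z) != Some z ->
  forall y, y \in C R -> ~~ anc z y.
Proof.
move=> Rq large zR; have [qR qanc _] := Rq; rewrite (C_large Rq large).
rewrite in_setD in_setU negb_or -andbA => /and3P[pS _ pR] pz light y.
have zq : z != q.
  apply: contra pz => /eqP zq; rewrite zq in pR *.
  by rewrite -(anc_antisym (qanc _ pR) (anc_parent q)).
rewrite in_setU => /orP[yS|].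
  by apply: no_CV_below_light_child Rq zR _ pz light y yS; rewrite in_setD pS.
rewrite !inE => /orP[]/eqP ->.
  by apply: contra zq => zq'; rewrite (anc_antisym zq' (qanc _ zR)).
by apply: contra light => zl; rewrite (lfollow_leftmost (qanc _ zR) zq zl).
Qed.

Lemma lfollow_exit R f w a b : parent b = a -> b \notin R ->
  (forall z, anc w z -> anc z a -> z \in R) -> anc w a -> leftmost_path w b ->
  depth a - depth w <= f -> lfollow R f w = a.
Proof.
move=> pb bR; have ab : anc a b by rewrite -pb anc_parent.
elim: f w => [|f IH] w wR wa wb /=.
  rewrite leqn0 subn_eq0 => dwa; have [//|wa'] := eqVneq w a.
  by move: dwa; rewrite leqNgt (depth_lt wa wa').
have [wa0 _|wa' dwa] := eqVneq w a.
  rewrite -{}wa0 in pb ab *.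
  have ba : b != w by apply: contraNneq bR => ->; apply: wR (anc_refl w) wa.
  have c1w : c1 w = Some b by rewrite -pb; apply: wb ab ba (anc_refl b).
  by rewrite /Defs.c1R c1w (negbTE bR).
have [c [pc cw ca]] := anc_exists_child wa wa'.
have wc : anc w c by rewrite -pc anc_parent.
have c1w : c1 w = Some c by rewrite -pc; apply: wb => //; apply: anc_trans ca ab.
rewrite /Defs.c1R c1w wR //; apply: IH => //.
- by move=> z cz za; apply: wR (anc_trans wc cz) za.
- exact: leftmost_path_sub wb.
- by have := depth_lt wc (contra_neq esym cw); lia.
Qed.

Lemma leftmost_path_into_C R Q q b : canonical R -> 2 * k + 2 < #|R| ->
  rooted_subtree Q q -> Q \subset R :\: C R -> parent b \in Q -> b \in C R ->
  leftmost_path q b.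
Proof.
move=> HR large Qq /subsetP QA pbQ bC z qz zq zb.
have [qR Rq] := canonical_rooted HR; have [_ _ qpath] := Qq.
have [pzQ pz] : parent z \in Q /\ parent z != z.
  have [-> |zb'] := eqVneq z b.
    split=> //; apply: contraTneq bC => <-.
    by move: (QA _ pbQ); rewrite in_setD => /andP[].
  by apply: rooted_parent Qq _ zq; apply: qpath pbQ qz (anc_parent_of zb zb').
have zR : z \in R.
  have [-> |zb'] := eqVneq z b; first exact: subsetP (C_subset R) _ bC.
  have zQ := qpath _ _ pbQ qz (anc_parent_of zb zb').
  by move: (QA _ zQ); rewrite in_setD => /andP[].
apply/eqP; apply: contraTT zb => light.
exact: no_C_below_light_child Rq large zR (QA _ pzQ) pz light _ bC.
Qed.

Lemma canonical_boundary Q a b : canonical Q -> a \in Q -> adjT a b -> b \notin Q ->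
  a \in C Q.
Proof.
move=> HQ; elim: HQ a b => [|R x HR IH xA] a b aQ ab bQ; first by rewrite inE in bQ.
set A := R :\: C R in xA aQ bQ *.
have [aC aR] : a \notin C R /\ a \in R.
  by move: (comp_sub xA aQ); rewrite in_setD => /andP[].
have bR : b \in R by apply: contraT => bR; move: aC; rewrite (IH a b aR ab bR).
have bC : b \in C R.
  by apply: contraT => bC; move: bQ; rewrite (comp_adj xA aQ _ ab) // in_setD bC.
have large : 2 * k + 2 < #|R| by rewrite ltnNge; apply: contra aC => /C_small ->.
have [q /rooted_comp Qq] := top_in_exists xA; have [_ qanc qpath] := Qq.
have [/C_small -> //|largeQ] := leqP #|comp A x| (2 * k + 2).
rewrite (C_large Qq largeQ) !inE; apply/orP; right.
case/orP: ab => /andP[/eqP pb _]; apply/orP; [right|left]; apply/eqP; last first.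
  by apply: rooted_top Qq aQ _; rewrite pb.
have pbQ : parent b \in comp A x by rewrite pb.
symmetry; apply: lfollow_exit pb bQ _ (qanc _ aQ) _ _.
- by move=> z qz za; apply: qpath aQ qz za.
- apply: leftmost_path_into_C HR large Qq _ pbQ bC.
  by apply/subsetP => y; apply: comp_sub.
- by apply: leq_trans (leq_subr _ _) (max_card _).
Qed.

Hypothesis k_ge4 : 4 <= k.

Lemma comp_C_half R x : canonical R -> x \in R :\: C R ->
  2 * #|comp (R :\: C R) x| <= #|R|.
Proof.
move=> HR xA; have [q Rq] := canonical_rooted HR.
have [xC xR] : x \notin C R /\ x \in R by move: xA; rewrite in_setD => /andP[].
have [/C_small RC|large] := leqP #|R| (2 * k + 2); first by move: xC; rewrite RC xR.
set S := CV #|R| #|V|.+1 R.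
have le_comp : #|comp (R :\: C R) x| <= #|comp (R :\: S) x|.
  by apply/subset_leq_card/comp_subset/setDS; rewrite (C_large Rq large) subsetUl.
have xS : x \notin S by apply: contra xC; rewrite (C_large Rq large) in_setU => ->.
have small : k * #|comp (R :\: S) x| < #|R|.
  by apply: CV_comp_small Rq _ xR xS; rewrite ltnS max_card.
have : 4 * #|comp (R :\: C R) x| <= k * #|comp (R :\: S) x| by apply: leq_mul.
lia.
Qed.

Fixpoint chain u i : {set V} :=
  if i is i'.+1 then
    let R := chain u i' in if u \in C R then R else comp (R :\: C R) u
  else setT.

Definition home u := chain u #|V|.

Lemma chain_in u i : u \in chain u i.
Proof. by elim: i => [|i IH] /=; [rewrite inE | case: ifP => _ //; exact: comp_self]. Qed.

Lemma chain_canonical u i : canonical (chain u i).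
Proof.
elim: i => [|i IH] /=; first exact: canT.
by case: ifP => // uC; apply: canC; rewrite // in_setD uC chain_in.
Qed.

Lemma chainS_subset u i : chain u i.+1 \subset chain u i.
Proof.
rewrite /=; case: ifP => // uC; apply/subsetP => y.
by move/(comp_sub (_ : u \in _ :\: _)); rewrite !in_setD uC chain_in => /(_ isT)/andP[].
Qed.

Lemma chain_subset u i j : i <= j -> chain u j \subset chain u i.
Proof.
move/subnK <-; elim: (j - i) => [|d IH]; first by rewrite add0n.
by rewrite addSn; apply: subset_trans (chainS_subset _ _) IH.
Qed.

Lemma chain_fixed u i j : chain u i.+1 = chain u i -> i <= j -> chain u j = chain u i.
Proof.
move=> fixed /subnK <-; elim: (j - i) => [|d IH]; first by rewrite add0n.
by rewrite addSn -[RHS]fixed /= IH.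
Qed.

Lemma chain_stationary u : exists2 i, i < #|V| & chain u i.+1 = chain u i.
Proof.
have shrink i : (exists2 j, j < i & chain u j.+1 = chain u j) \/ #|chain u i| + i <= #|V|.
  elim: i => [|i [[j ji fixed]|IH]]; first by right; rewrite addn0 max_card.
    by left; exists j => //; apply: ltnW.
  have [fixed|moved] := eqVneq (chain u i.+1) (chain u i); first by left; exists i.
  right; apply: leq_trans IH; rewrite addnS ltn_add2r; apply: proper_card.
  by rewrite properEneq moved chainS_subset.
case: (shrink #|V|) => // full.
have : #|chain u #|V| | <= 0 by rewrite -(leq_add2r #|V|).
by rewrite leqn0 cards_eq0 => /eqP empty; move: (chain_in u #|V|); rewrite empty inE.
Qed.

Lemma chain_home u j : #|V| <= j -> chain u j = home u.
Proof.
have [i iV fixed] := chain_stationary u => Vj.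
by rewrite /home !(chain_fixed fixed) // (leq_trans (ltnW iV)).
Qed.

Lemma home_in u : u \in home u.
Proof. exact: chain_in. Qed.

Lemma home_canonical u : canonical (home u).
Proof. exact: chain_canonical. Qed.

Lemma home_C u : u \in C (home u).
Proof.
have := chain_home u (leqnSn _); rewrite /home /=; case: ifP => // uC fixed.
have [q Rq] := canonical_rooted (chain_canonical u #|V|); have [qR _ _] := Rq.
have uA : u \in chain u #|V| :\: C (chain u #|V|) by rewrite in_setD uC chain_in.
have qC : q \in C (chain u #|V|).
  have [/C_small -> //|large] := leqP #|chain u #|V| | (2 * k + 2).
  by rewrite (C_large Rq large) !inE eqxx orbT.
have : q \in comp (chain u #|V| :\: C (chain u #|V|)) u by rewrite fixed.
by move/(comp_sub uA); rewrite in_setD qC.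
Qed.

Lemma canonical_chain Q u : canonical Q -> u \in Q -> exists i, Q = chain u i.
Proof.
move=> HQ; elim: HQ u => [|R x HR IH xA] u uQ; first by exists 0.
have uA : u \in R :\: C R := comp_sub xA uQ.
have [uC uR] : u \notin C R /\ u \in R by move: uA; rewrite in_setD => /andP[].
have [i Ri] := IH u uR; exists i.+1; rewrite /= -Ri (negbTE uC).
by rewrite (comp_eq uQ).
Qed.

Lemma home_unique Q u : canonical Q -> u \in C Q -> Q = home u.
Proof.
move=> HQ uC; have [i Qi] := canonical_chain HQ (subsetP (C_subset Q) _ uC).
have fixed : chain u i.+1 = chain u i by rewrite /= -Qi uC.
have [iV|Vi] := leqP i #|V|; first by rewrite /home (chain_fixed fixed iV) Qi.
by rewrite Qi chain_home // ltnW.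
Qed.

Lemma home_subset Q u : canonical Q -> u \in Q -> home u \subset Q.
Proof.
move=> HQ uQ; have [i ->] := canonical_chain HQ uQ.
have [iV|Vi] := leqP i #|V|; first exact: chain_subset.
by rewrite chain_home // ltnW.
Qed.

Lemma chain_half u i : chain u i.+1 != chain u i ->
  [/\ u \notin C (chain u i), chain u i.+1 = comp (chain u i :\: C (chain u i)) u &
      2 * #|chain u i.+1| <= #|chain u i|].
Proof.
rewrite /=; case: ifP => [_|uC _]; first by rewrite eqxx.
split => //; apply: comp_C_half; first exact: chain_canonical.
by rewrite in_setD uC chain_in.
Qed.

Definition common u v := chain u (\max_(j < #|V|.+1 | v \in chain u j) j).

Lemma common_canonical u v : canonical (common u v).
Proof. exact: chain_canonical. Qed.

Lemma common_inl u v : u \in common u v.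
Proof. exact: chain_in. Qed.

Lemma common_inr u v : v \in common u v.
Proof.
have exists_j : 0 < #|[pred j : 'I_#|V|.+1 | v \in chain u j]|.
  by apply/card_gt0P; exists ord0; rewrite !inE.
rewrite /common.
by have [j /= vj ->] := eq_bigmax_cond (fun j : 'I_#|V|.+1 => j : nat) exists_j.
Qed.

Lemma common_min Q u v : canonical Q -> u \in Q -> v \in Q -> common u v \subset Q.
Proof.
move=> HQ uQ vQ; have [i Qi] := canonical_chain HQ uQ.
have [j [Qj jV vj]] : exists j, [/\ chain u j = Q, j <= #|V| & v \in chain u j].
  have [iV|Vi] := leqP i #|V|; first by exists i; rewrite -Qi.
  have ihome : chain u i = chain u #|V| := chain_home u (ltnW Vi).
  by exists #|V|; rewrite -ihome -Qi.
rewrite -Qj /common; apply: chain_subset.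
by apply: (@leq_bigmax_cond _ (fun j : 'I_#|V|.+1 => v \in chain u j)
  (fun j : 'I_#|V|.+1 => j : nat) (Ordinal (jV : j < #|V|.+1))).
Qed.

Lemma home_subset_common u v : home u \subset common u v.
Proof. exact: home_subset (common_canonical u v) (common_inl u v). Qed.

Local Notation adjG := (Defs.adjG parent c1 k).
Local Notation step := (Defs.step parent c1 k).

Definition progress_move u v u' :=
  [/\ exists2 z, z \in C (home u) & adjT z u', on_path u v u' &
      forall w, w \in C (home u) -> ~ on_path u' v w].

Definition home_move u v u' := [/\ u' \in C (home u), anc u' v & ~~ anc u v].

(* The exceptional outcome of Case 3 a): [u'] lies strictly below the lowest
   common ancestor [l] of [u] and [v], and [l] lies in [C (home u)]. *)
Definition detour_move u v u' := exists l y,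
  [/\ [/\ anc l u, anc l v & forall w, anc w u -> anc w v -> anc w l],
      l \in C (home u) /\ y \in C (home u),
      [/\ parent y = u', y != u' & anc y u],
      ~~ anc u' v /\ ~~ anc v u &
      forall w, anc l w -> w != l -> anc w u' -> w \notin C (home u)].

Lemma child_of_deepest_progress u v x u' : x \in C (home u) -> child x u' ->
  anc u' v -> (forall w, anc w u -> anc w v -> anc w x) ->
  (forall w, w \in C (home u) -> anc u' w -> anc w v -> anc w x) ->
  progress_move u v u'.
Proof.
move=> xC xu' u'v below deepest; have /andP[/eqP pu' u'x] := xu'.
have xu'_anc : anc x u' by rewrite -pu' anc_parent.
split; first by exists x; rewrite // /Defs.adjT xu'.
  by split=> [|w wu wv]; [right | apply: anc_trans (below w wu wv) xu'_anc].
move=> w wC [wu'v u'w]; have {}u'w := u'w u' (anc_refl u') u'v.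
have wv : anc w v by case: wu'v => // wu'; apply: anc_trans wu' u'v.
have wx := deepest w wC u'w wv.
by move: u'x; rewrite (anc_antisym (anc_trans u'w wx) xu'_anc) eqxx.
Qed.

Lemma case1_progress u v x u' : u \in C (home u) -> anc u v ->
  deepest parent [set z in C (home u) | anc z v] x -> child x u' -> anc u' v ->
  progress_move u v u'.
Proof.
move=> uC uv [xX deepest] xu' u'v; move: xX; rewrite inE => /andP[xC _].
apply: child_of_deepest_progress xC xu' u'v _ _ => [w wu _|w wC _ wv].
  by apply: anc_trans wu (deepest _ _); rewrite inE uC uv.
by apply: deepest; rewrite inE wC wv.
Qed.

Lemma case3b_progress u v x u' : deepest parent [set z in C (home u) | anc z v && ~~ anc z u] x ->
  child x u' -> anc u' v -> progress_move u v u'.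
Proof.
move=> [xX deepest] xu' u'v; move: xX; rewrite inE => /and3P[xC xv xu].
have xu'_anc : anc x u' by case/andP: xu' => /eqP <- _; apply: anc_parent.
apply: child_of_deepest_progress xC xu' u'v _ _ => [w wu wv|w wC u'w wv].
  case/orP: (anc_total wv xv) => // xw.
  by move: xu; rewrite (anc_trans xw wu).
apply: deepest; rewrite inE wC wv; apply: contra xu => wu.
exact: anc_trans xu'_anc (anc_trans u'w wu).
Qed.

Lemma case2_progress u v x : v \notin C (home u) -> anc v u ->
  highest parent [set z in C (home u) | anc v z && anc z u] x ->
  progress_move u v (parent x).
Proof.
move=> vC vu [xX highest]; move: xX; rewrite inE => /and3P[xC vx xu].
have xv : v != x by apply: contraNneq vC => ->.
have xr : x != r by apply: contra xv => /eqP xr; rewrite (anc_antisym vx) // xr anc_root.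
have px := parent_neq xr.
split.
- by exists x; rewrite // /Defs.adjT /child eqxx (eq_sym x) px orbT.
- split; first by left; apply: anc_trans (anc_parent _) xu.
  by move=> w wu wv; apply: anc_trans wv (anc_parent_of vx xv).
- move=> w wC [[wp|wv] vw]; have {}vw := vw v (anc_parent_of vx xv) (anc_refl v).
    have xw : anc x w.
      by apply: highest; rewrite inE wC vw (anc_trans wp) ?(anc_trans (anc_parent _) xu).
    by move: px; rewrite (anc_antisym (anc_parent _) (anc_trans xw wp)) eqxx.
  by move: vC; rewrite (anc_antisym vw wv) wC.
Qed.

Lemma case3a_moves u v y u' : u \in C (home u) -> ~~ anc u v -> ~~ anc v u ->
  [set z in C (home u) | anc z v && ~~ anc z u] = set0 ->
  highest parent [set z in C (home u) | anc z u && ~~ anc z v] y -> parent y = u' ->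
  [\/ progress_move u v u', home_move u v u' | detour_move u v u'].
Proof.
move=> uC uv vu X0 [yY highest] pu; set S := home u in uC yY highest X0 *.
move: yY; rewrite inE => /and3P[yC yu yv].
have [l [lu lv lca]] := lca_exists u v.
have ly : anc l y by case/orP: (anc_total yu lu) => // yl; move: yv; rewrite (anc_trans yl lv).
have yl : y != l by apply: contraNneq yv => ->.
have lu' : anc l u' by rewrite -pu; apply: anc_parent_of ly _; rewrite eq_sym.
have u'u : anc u' u by rewrite -pu; apply: anc_trans (anc_parent _) yu.
have yu' : y != u' by rewrite -pu eq_sym parent_neq //; apply: contraNneq yv => ->; apply: anc_root.
have between w : anc l w -> w != l -> anc w u' -> w \notin C S.
  move=> lw wl wu'; apply: contra yu' => wC; have wu := anc_trans wu' u'u.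
  have wv : ~~ anc w v by apply: contra wl => wv; rewrite (anc_antisym (lca _ wu wv) lw).
  have yw : anc y w by apply: highest; rewrite inE wC wu wv.
  by rewrite (anc_antisym (anc_trans yw wu') _) // -pu anc_parent.
have C_anc_v w : w \in C S -> anc w v -> anc w u.
  move=> wC wv; apply: contraT => wu.
  by have := in_set0 w; rewrite -X0 inE wC wv wu.
have adj : adjT y u' by rewrite /Defs.adjT /child pu eqxx yu' orbT.
have [u'v|u'v] := boolP (anc u' v).
  have u'l : u' = l by apply: anc_antisym (lca _ u'u u'v) lu'.
  have [u'C|u'C] := boolP (u' \in C S); first by apply: Or32; split.
  apply: Or31; split; first by exists y.
    by split=> [|w wu wv]; [right | rewrite u'l; apply: lca].
  move=> w wC [[wu'|wv] u'w]; have {}u'w := u'w u' (anc_refl u') u'v.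
    by move: u'C; rewrite -(anc_antisym wu' u'w) wC.
  have := lca _ (C_anc_v _ wC wv) wv; rewrite -u'l => wu'.
  by move: u'C; rewrite -(anc_antisym wu' u'w) wC.
have [lC|lC] := boolP (l \in C S).
  by apply: Or33; exists l, y; split.
apply: Or31; split; first by exists y.
  by split=> [|w wu wv]; [left | apply: anc_trans (lca _ wu wv) lu'].
move=> w wC [[wu'|wv] lw]; have {}lw := lw l lu' lv.
  have wl : w != l by apply: contraNneq lC => <-.
  by move: wC; rewrite (negbTE (between _ lw wl wu')).
have wl := lca _ (C_anc_v _ wC wv) wv.
by move: lC; rewrite -(anc_antisym wl lw) wC.
Qed.

Lemma step_cases v u u' c : step v u u' c ->
  c <= 2 /\ [\/ u' = v, progress_move u v u', home_move u v u' | detour_move u v u'].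
Proof.
case=> neq_uv [[_ [-> ->]]|[nadj [R [HR uC st]]]]; first by split=> //; apply: Or41.
have R_home := home_unique HR uC; subst R.
have vC : v \notin C (home u).
  apply/negP => vC; apply: nadj; right.
  by exists (home u); split; rewrite ?uC ?vC //; apply: home_canonical.
case: st => [[uv [x [xD [xu' [u'v ->]]]]]|[[vu [_ [x [xH [-> ->]]]]]|
  [uv [vu [[X0 [y [yH [-> ->]]]]|[_ [x [xD [xu' [u'v ->]]]]]]]]]];
  (split; first by case: (_ != u)).
- by apply: Or42; apply: case1_progress xD xu' u'v.
- by apply: Or42; apply: case2_progress xH.
- by case: (case3a_moves uC uv vu X0 yH erefl) => ?; [apply: Or42|apply: Or43|apply: Or44].
- by apply: Or42; apply: case3b_progress xD xu' u'v.
Qed.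

Definition lg (X : {set V}) := trunc_log 2 #|X|.

Definition potential u v :=
  2 * ((lg (common u v) - lg (home u)) + lg (common u v)) + ~~ anc u v.

Lemma lg_subset (X Y : {set V}) : X \subset Y -> lg X <= lg Y.
Proof. by move=> XY; apply/leq_trunc_log/subset_leq_card. Qed.

Lemma lg_half (X Y : {set V}) : 0 < #|X| -> 2 * #|X| <= #|Y| -> lg X < lg Y.
Proof.
by move=> X0 XY; rewrite /lg -trunc_log2_double //; apply: leq_trunc_log; rewrite -mul2n.
Qed.

Lemma potential_le u v : potential u v <= 4 * trunc_log 2 #|V| + 1.
Proof.
have : lg (common u v) <= trunc_log 2 #|V| by apply/leq_trunc_log/max_card.
by rewrite /potential; case: (~~ anc u v); lia.
Qed.

Lemma common_swap u v w : w \in common u v -> u \in common w v ->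
  common w v = common u v.
Proof.
move=> wN uN; apply/eqP; rewrite eqEsubset; apply/andP; split.
  exact: common_min (common_canonical u v) wN (common_inr u v).
exact: common_min (common_canonical w v) uN (common_inr w v).
Qed.

Lemma home_move_dec u v w : w \in C (home u) -> anc w v -> ~~ anc u v ->
  potential w v < potential u v.
Proof.
move=> wC wv uv; have hw : home w = home u := esym (home_unique (home_canonical u) wC).
have Nw : common w v = common u v.
  apply: common_swap; last by apply: (subsetP (home_subset_common w v)); rewrite hw home_in.
  exact: subsetP (home_subset_common u v) _ (subsetP (C_subset _) _ wC).
by rewrite /potential hw Nw wv uv addn0 addn1.
Qed.

Lemma progress_inside_dec u v u' : progress_move u v u' -> v \in home u ->
  potential u' v < potential u v.
Proof.
case=> [[z zC zu'] onu' offC] vS; set S := home u in zC offC vS *.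
have HS : canonical S := home_canonical u; have [q Sq] := canonical_rooted HS.
have NS : common u v = S.
  by apply/eqP; rewrite eqEsubset common_min ?home_in // home_subset_common.
have u'S : u' \in S := on_path_rooted Sq (home_in u) vS onu'.
have u'A : u' \in S :\: C S.
  by rewrite in_setD u'S andbT; apply/negP => /offC; apply; apply: on_path_self.
set Q := comp (S :\: C S) u'; have HQ : canonical Q := canC HS u'A.
have vQ : v \in Q.
  rewrite inE; apply: connect_on_path => w wpath.
  by rewrite in_setD (on_path_rooted Sq u'S vS wpath) andbT; apply/negP => /offC.
have zQ : z \notin Q by apply/negP => /(comp_sub u'A); rewrite in_setD zC.
have u'CQ : u' \in C Q.
  by apply: canonical_boundary HQ (comp_self _ _) _ zQ; rewrite /Defs.adjT orbC.
have hu' : home u' = Q := esym (home_unique HQ u'CQ).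
have Nu' : common u' v = Q.
  by apply/eqP; rewrite eqEsubset common_min ?comp_self // -hu' home_subset_common.
have : lg Q < lg S.
  by apply: lg_half (comp_C_half HS u'A); apply/card_gt0P; exists u'; apply: comp_self.
rewrite /potential NS Nu' hu' !subnn => lgQS; clear -lgQS.
by case: (~~ anc u' v); case: (~~ anc u v); lia.
Qed.

Lemma progress_outside_dec u v u' : progress_move u v u' -> v \notin home u ->
  potential u' v < potential u v.
Proof.
case=> [[z zC zu'] onu' offC] vS; set S := home u in zC offC vS *.
have u'S : u' \notin S.
  apply/negP => u'S; have [a [b [aS bS ab ona _]]] := on_path_exit u'S vS.
  exact: offC a (canonical_boundary (home_canonical u) aS ab bS) ona.
set N := common u v; have [qN Nq] := canonical_rooted (common_canonical u v).
have u'N : u' \in N := on_path_rooted Nq (common_inl u v) (common_inr u v) onu'.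
have [[|j] u'j1 minj] := ex_minnP (ex_intro (fun n => u' \notin chain u n) _ u'S).
  by rewrite inE in u'j1.
have u'j : u' \in chain u j by apply/contraT => /minj; rewrite ltnn.
have moved : chain u j.+1 != chain u j by apply: contraNneq u'j1 => ->.
have [uCj chainj half] := chain_half moved.
have Sj : S \subset chain u j.+1 := chain_subset u (minj _ u'S).
have u'Cj : u' \in C (chain u j).
  apply: contraT => u'C; move: u'j1; rewrite chainj (comp_adj _ _ _ zu') //.
  - by rewrite in_setD uCj chain_in.
  - by rewrite -chainj (subsetP Sj) // (subsetP (C_subset S)).
  - by rewrite in_setD u'C.
have hu' : home u' = chain u j := esym (home_unique (chain_canonical u j) u'Cj).
have Nu' : common u' v = N.
  by apply: common_swap u'N _; apply: (subsetP (home_subset_common u' v)); rewrite hu' chain_in.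
have lgS : lg S < lg (chain u j).
  apply: lg_half; first by apply/card_gt0P; exists u; apply: home_in.
  by apply: leq_trans half; rewrite leq_mul2l subset_leq_card.
have lgN : lg (chain u j) <= lg N by rewrite -hu' -Nu'; apply/lg_subset/home_subset_common.
rewrite /potential Nu' hu' -/N -/S; clear -lgS lgN.
by case: (~~ anc u' v); case: (~~ anc u v); lia.
Qed.

Lemma progress_dec u v u' : progress_move u v u' -> u' != v ->
  potential u' v < potential u v.
Proof.
move=> move_u _; have [vS|vS] := boolP (v \in home u).
  exact: progress_inside_dec.
exact: progress_outside_dec.
Qed.

Lemma detour_home u v u' : detour_move u v u' -> exists l t,
  [/\ l \in C (home u), anc l v, ~~ anc u v, parent t = l &
      [/\ t \in C (home u'), rooted_subtree (home u') t, anc t u', ~~ anc t v & ~~ anc v u']].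
Proof.
case=> l [y [[lu lv lca] [lC yC] [pu yu' yu] [u'v vu] between]].
set S := home u in lC yC between; have HS : canonical S := home_canonical u.
have [qS [_ qanc qpath]] := canonical_rooted HS.
have u'u : anc u' u by rewrite -pu; apply: anc_trans (anc_parent _) yu.
have ly : anc l y.
  case/orP: (anc_total yu lu) => // yl.
  by move: u'v; rewrite -pu (anc_trans (anc_parent _) (anc_trans yl lv)).
have lu' : anc l u'.
  rewrite -pu; apply: anc_parent_of ly _; apply: contraNneq u'v => ly'.
  by rewrite -pu -ly' (anc_trans (anc_parent _) lv).
have u'l : u' != l by apply: contraNneq u'v => ->.
have lS : l \in S := subsetP (C_subset S) l lC.
have in_S w : anc l w -> anc w u -> w \in S.
  by move=> lw wu; apply: qpath (home_in u) (anc_trans (qanc _ lS) lw) wu.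
have u'A : u' \in S :\: C S by rewrite in_setD between ?anc_refl // in_S.
set Q := comp (S :\: C S) u'; have HQ : canonical Q := canC HS u'A.
have [t [pt tl tu']] := anc_exists_child lu' (contra_neq esym u'l).
have lt : anc l t by rewrite -pt anc_parent.
have top : top_in (S :\: C S) t u'.
  split=> //; last by rewrite pt in_setD lC.
  move=> w tw wu'; have lw := anc_trans lt tw.
  have wl : w != l by apply: contraNneq tl => wl; rewrite (anc_antisym tw) // wl.
  by rewrite in_setD between // in_S // (anc_trans wu' u'u).
have Qt : rooted_subtree Q t := rooted_comp top; have [tQ _ _] := Qt.
have lQ : l \notin Q by apply/negP => /(comp_sub u'A); rewrite in_setD lC.
have yQ : y \notin Q by apply/negP => /(comp_sub u'A); rewrite in_setD yC.
have u'CQ : u' \in C Q.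
  by apply: canonical_boundary HQ (comp_self _ _) _ yQ; rewrite /Defs.adjT /child pu eqxx yu'.
have tCQ : t \in C Q.
  by apply: canonical_boundary HQ tQ _ lQ; rewrite /Defs.adjT /child pt eqxx tl orbT.
have tv : ~~ anc t v.
  apply: contra tl => tv; have tl' := lca _ (anc_trans tu' u'u) tv.
  by rewrite (anc_antisym tl' lt).
have uv : ~~ anc u v by apply: contra u'v; apply: anc_trans u'u.
have vu' : ~~ anc v u' by apply: contra vu => vu'; apply: anc_trans vu' u'u.
by exists l, t; rewrite -(home_unique HQ u'CQ).
Qed.

Lemma detour_next u v u' u'' c : detour_move u v u' -> step v u' u'' c ->
  u'' = v \/ potential u'' v < potential u v.
Proof.
move=> /detour_home[l [t [lC lv uv pt [tC [_ tanc _] tu' tv vu']]]].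
case=> _ [[_ [-> _]]|[_ [R [HR u'C st]]]]; first by left.
have R_home := home_unique HR u'C; subst R; right.
case: st => [[u'v _]|[[vu _]|[_ [_ [[_ [y [[yY highest] [-> _]]]]|[Xn _]]]]]].
- by move: tv; rewrite (anc_trans tu' u'v).
- by rewrite vu in vu'.
- have yt : anc y t by apply: highest; rewrite inE tC tu' tv.
  move: yY; rewrite inE => /andP[yC _].
  rewrite (anc_antisym yt (tanc _ (subsetP (C_subset _) _ yC))) pt.
  exact: home_move_dec lC lv uv.
- case/set0Pn: Xn => w; rewrite inE => /and3P[wC wv _].
  by move: tv; rewrite (anc_trans (tanc _ (subsetP (C_subset _) _ wC)) wv).
Qed.

Lemma adjGP u v :
  reflect (adjG u v) (adjT u v || (u != v) && (v \in C (home u))).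
Proof.
apply: (iffP orP) => [[adj|/andP[uv vC]]|[adj|[R [HR uC vC uv]]]]; [by left | | by left |].
  by right; exists (home u); split; rewrite ?home_C //; apply: home_canonical.
by right; rewrite uv -(home_unique HR uC).
Qed.

Lemma step_exists u v : u != v -> exists u' c, step v u u' c.
Proof.
move=> uv; have [adj|nadj] := adjGP u v; first by exists v, 1; split => //; left.
set S := home u; have uC : u \in C S := home_C u.
have vC : v \notin C S by apply/negP => vC; apply/nadj/adjGP; rewrite uv vC orbT.
suff [u' [c st]] : exists u' c, stepR parent c1 k S v u u' c.
  by exists u', c; split => //; right; split => //; exists S; split => //; apply: home_canonical.
have toward_v x : x \in C S -> anc x v -> exists2 u', child x u' & anc u' v.
  move=> xC xv; have xv' : x != v by apply: contraNneq vC => <-.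
  have [c [pc cx cv]] := anc_exists_child xv xv'.
  by exists c; rewrite // /Defs.child pc eqxx cx.
have [uv'|nuv] := boolP (anc u v).
  have [x xD] : exists x, deepest parent [set z in C S | anc z v] x.
    by apply: (deepest_exists (x0 := u) (w := v)); rewrite ?inE ?uC // => z; rewrite inE => /andP[].
  have [xC xv] : x \in C S /\ anc x v by case: xD; rewrite inE => /andP[].
  have [u' xu' u'v] := toward_v x xC xv.
  by exists u', ((x != u) + 1); left; split => //; exists x.
have [vu|nvu] := boolP (anc v u).
  have [x xH] : exists x, highest parent [set z in C S | anc v z && anc z u] x.
    apply: (highest_exists (x0 := u) (w := u)); first by rewrite inE uC vu anc_refl.
    by move=> z; rewrite inE => /and3P[].
  by exists (parent x), ((x != u) + 1); right; left; do !split=> //; exists x.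
have [X0|Xn] := eqVneq [set z in C S | anc z v && ~~ anc z u] set0.
  have [y yH] : exists y, highest parent [set z in C S | anc z u && ~~ anc z v] y.
    apply: (highest_exists (x0 := u) (w := u)); first by rewrite inE uC anc_refl nuv.
    by move=> z; rewrite inE => /and3P[].
  by exists (parent y), ((y != u) + 1); right; right; do !split=> //; left; split => //; exists y.
have [x0 x0X] := set0Pn _ Xn.
have [x xD] : exists x, deepest parent [set z in C S | anc z v && ~~ anc z u] x.
  by apply: (deepest_exists (x0 := x0) (w := v)) => // z; rewrite inE => /and3P[].
have [xC xv] : x \in C S /\ anc x v by case: xD; rewrite inE => /and3P[].
have [u' xu' u'v] := toward_v x xC xv.
by exists u', ((x != u) + 1); right; right; do !split=> //; right; split => //; exists x.
Qed.

Local Notation reach := (Defs.reach parent c1 k).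
Local Notation run := (Defs.run parent c1 k).

Lemma run_stop v m : run v v m -> m = 0.
Proof.
have stop u m' : run v u m' -> u = v -> m' = 0.
  by case=> // {}u u' c c' [uv _] _ eq_uv; rewrite eq_uv eqxx in uv.
by move=> rv; apply: stop rv erefl.
Qed.

Lemma detour_potential_pos u v u' : detour_move u v u' -> 0 < potential u v.
Proof. by case/detour_home=> l [t [_ _ uv _ _]]; rewrite /potential uv addn1. Qed.

Lemma run_bound v u m : run v u m -> m <= 4 * potential u v + 2.
Proof.
suff bound p u' m' : potential u' v = p -> run v u' m' -> m' <= 4 * potential u' v + 2.
  exact: bound.
elim/ltn_ind: p u' m' => p IH {}u {}m pu run_u.
have IH' u2 m2 : potential u2 v < potential u v -> run v u2 m2 -> m2 <= 4 * potential u2 v + 2.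
  by rewrite pu => lt; apply: IH lt _ _ erefl.
clear IH pu; case: run_u IH' => [//|{}u u' c c' st r'] IH'.
have [c2 [eq_u'|progress|homemove|detour]] := step_cases st.
- by rewrite eq_u' in r'; rewrite (run_stop r'); lia.
- have [eq_u'|u'v] := eqVneq u' v; first by rewrite eq_u' in r'; rewrite (run_stop r'); lia.
  have lt := progress_dec progress u'v; have := IH' _ _ lt r'; lia.
- case: homemove => u'C u'v uv.
  have lt := home_move_dec u'C u'v uv; have := IH' _ _ lt r'; lia.
- have pos := detour_potential_pos detour.
  clear st; case: r' detour => [|{}u' u'' c3 c4 st2 r''] detour; first by lia.
  have [c3_le _] := step_cases st2.
  case: (detour_next detour st2) => [eq_u''|lt].
    by rewrite eq_u'' in r''; rewrite (run_stop r''); lia.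
  have := IH' _ _ lt r''; lia.
Qed.

Lemma reach_exists v u : exists m, reach v u m.
Proof.
suff ex p u' : potential u' v = p -> exists m, reach v u' m by apply: ex.
elim/ltn_ind: p u' => p IH {}u pu.
have IH' u2 : potential u2 v < potential u v -> exists m, reach v u2 m.
  by rewrite pu => lt; apply: IH lt _ erefl.
have [->|uv] := eqVneq u v; first by exists 0; apply: reach0.
have [u' [c st]] := step_exists uv.
have extend u2 c2 : step v u u2 c2 -> (exists m, reach v u2 m) -> exists m, reach v u m.
  by move=> st2 [m r2]; exists (c2 + m); apply: reachS st2 r2.
have stop : u' = v -> exists m, reach v u m.
  by move=> eq_u'; apply: extend st _; exists 0; rewrite eq_u'; apply: reach0.
have [_ [eq_u'|progress|homemove|detour]] := step_cases st; first exact: stop.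
- have [/stop//|u'v] := eqVneq u' v.
  exact: extend st (IH' _ (progress_dec progress u'v)).
- by case: homemove => u'C u'v nuv; apply: extend st (IH' _ (home_move_dec u'C u'v nuv)).
- apply: extend st _; have [->|u'v] := eqVneq u' v; first by exists 0; apply: reach0.
  have [u'' [c2 st2]] := step_exists u'v.
  have [eq_u''|lt] := detour_next detour st2.
    by exists (c2 + 0); apply: reachS st2 _; rewrite eq_u''; apply: reach0.
  by have [m r''] := IH' _ lt; exists (c2 + m); apply: reachS st2 r''.
Qed.

Lemma reach_run v u m : reach v u m -> run v u m.
Proof. by elim=> [|{}u u' c c' st _ IH]; [apply: run0 | apply: runS st IH]. Qed.

Lemma routing_cost u v :
  (exists m, reach v u m /\ m <= 16 * (trunc_log 2 #|V|).+1) /\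
  (forall m, run v u m -> m <= 16 * (trunc_log 2 #|V|).+1).
Proof.
have bound m : run v u m -> m <= 16 * (trunc_log 2 #|V|).+1.
  by move=> /run_bound; have := potential_le u v; lia.
split=> //; have [m rm] := reach_exists v u.
by exists m; split=> //; apply/bound/reach_run.
Qed.

End Separators.
End RootedTree.

Theorem theorem3 (k : nat) : 4 <= k ->
  exists c0 : nat,
  forall (V : finType) (r : V) (parent : V -> V) (c1 : V -> option V),
  is_rooted_tree r parent -> leftmost_choice parent c1 ->
  forall u v : V,
    (exists m, reach parent c1 k v u m /\ m <= c0 * (trunc_log 2 #|V|).+1) /\
    (forall m, run parent c1 k v u m -> m <= c0 * (trunc_log 2 #|V|).+1).
Proof.
move=> k_ge4; exists 16 => V r parent c1 tree leftmost u v.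
exact: (routing_cost tree).
Qed.
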